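(* Let $\mathcal{X}$ be a finite set with symmetric nonnegative weights $(w_{x,x'})$ summing to $1$, with $w_x:=\sum_{x'}w_{x,x'}>0$ for all $x$. Let $\boldsymbol{T}=(\tau_{x,x'})$ be a matrix of positive temperatures. For $f:\mathcal{X}\to\mathbb{R}^k$, define the temperature scaling loss $$\mathcal{L}_{\mathrm{T}}(f)=-2\sum_{x,x'}w_{x,x'}\frac{f(x)^\top f(x')}{\tau_{x,x'}}+\sum_{x,x'}w_xw_{x'}\Big[\frac{f(x)^\top f(x')}{\tau_{x,x'}}\Big]^2 .$$ Let $\boldsymbol{A}=(w_{x,x'})$, $\boldsymbol{D}=\mathrm{diag}(w_x)$, $\bar{\boldsymbol{A}}=\boldsymbol{D}^{-1/2}\boldsymbol{A}\boldsymbol{D}^{-1/2}$, and let $F$ be the matrix with rows $\sqrt{w_x}f(x)^\top$. Then there is a constant $C$, independent of $f$, such that for all $f$ $$\mathcal{L}_{\mathrm{T}}(f)=\|\boldsymbol{T}\odot\bar{\boldsymbol{A}}-FF^\top\|_{wF}^2+C .$$ In particular, minimizing $\mathcal{L}_{\mathrm{T}}$ over $f$ is equivalent to minimizing $\|\boldsymbol{T}\odot\bar{\boldsymbol{A}}-FF^\top\|_{wF}^2$ over $F$.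
   Context: $\odot$ denotes the entrywise product. The weighted Frobenius norm is defined by $\|\boldsymbol{B}\|_{wF}^2=\sum_{x,x'}b_{x,x'}^2/\tau_{x,x'}^2$ for $\boldsymbol{B}=(b_{x,x'})$. *)

From mathcomp Require Import all_boot all_order all_algebra.
Set Implicit Arguments. Unset Strict Implicit. Unset Printing Implicit Defensive.
Import Order.TTheory GRing.Theory Num.Theory.
Local Open Scope ring_scope.

Section Defs.
Variable R : rcfType.

Definition wdeg n (w : 'M[R]_n) (x : 'I_n) : R := \sum_(x' < n) w x x'.

Definition dotr k (u v : 'rV[R]_k) : R := (u *m v^T) 0 0.

Definition loss_T n k (w T : 'M[R]_n) (f : 'I_n -> 'rV[R]_k) : R :=
  - 2 * (\sum_(x < n) \sum_(x' < n) w x x' * (dotr (f x) (f x') / T x x'))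
  + \sum_(x < n) \sum_(x' < n)
      wdeg w x * wdeg w x' * (dotr (f x) (f x') / T x x') ^+ 2.

Definition Dinvsqrt n (w : 'M[R]_n) : 'M[R]_n :=
  diag_mx (\row_(x < n) (Num.sqrt (wdeg w x))^-1).

Definition Abar n (w : 'M[R]_n) : 'M[R]_n := Dinvsqrt w *m w *m Dinvsqrt w.

Definition hadamard m p (A B : 'M[R]_(m, p)) : 'M[R]_(m, p) :=
  map2_mx (fun a b => a * b) A B.

Definition Fmat n k (w : 'M[R]_n) (f : 'I_n -> 'rV[R]_k) : 'M[R]_(n, k) :=
  \matrix_(x < n, j < k) (Num.sqrt (wdeg w x) * f x 0 j).

Definition wFnorm2 n (T B : 'M[R]_n) : R :=
  \sum_(x < n) \sum_(x' < n) (B x x') ^+ 2 / (T x x') ^+ 2.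

End Defs.

(** The loss is a sum over pairs (x, x') of terms that are quadratic in
    s := f(x)^T f(x') / τ_{x,x'}.  Writing p := √w_x √w_{x'}, so that
    (F F^T)_{x,x'} = p τ s and Ā_{x,x'} = w_{x,x'} / p, completing the square
    turns each term into ((τ Ā - F F^T)_{x,x'})² / τ² minus w_{x,x'}² / (w_x w_{x'}),
    and the subtracted part does not depend on f. *)

From mathcomp Require Import all_boot all_order all_algebra.
From mathcomp Require Import ring.
Import Order.TTheory GRing.Theory Num.Theory.
Local Open Scope ring_scope.

Lemma complete_square_scaled (F : fieldType) (c p s t : F) :
  p != 0 -> t != 0 ->
  - 2 * (c * (s / t)) + p ^+ 2 * (s / t) ^+ 2
    = (t * (c / p) - p * s) ^+ 2 / t ^+ 2 - c ^+ 2 / p ^+ 2.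
Proof. by move=> p0 t0; field; rewrite p0 t0. Qed.

Section TemperatureLoss.
Variables (R : rcfType) (n k : nat) (w T : 'M[R]_n).

Let sqrt_wdeg (x : 'I_n) : R := Num.sqrt (wdeg w x).

Lemma loss_TE (f : 'I_n -> 'rV[R]_k) :
  loss_T w T f = \sum_(x < n) \sum_(x' < n)
    (- 2 * (w x x' * (dotr (f x) (f x') / T x x'))
     + wdeg w x * wdeg w x' * (dotr (f x) (f x') / T x x') ^+ 2).
Proof.
rewrite /loss_T mulr_sumr -big_split; apply: eq_bigr => x _.
by rewrite mulr_sumr -big_split.
Qed.

Lemma AbarE (x x' : 'I_n) : Abar w x x' = w x x' / (sqrt_wdeg x * sqrt_wdeg x').
Proof.
by rewrite /Abar /Dinvsqrt mul_mx_diag mul_diag_mx !mxE invfM mulrA (mulrC (w x x')).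
Qed.

Lemma Fmat_mul_trE (f : 'I_n -> 'rV[R]_k) (x x' : 'I_n) :
  (Fmat w f *m (Fmat w f)^T) x x' = sqrt_wdeg x * sqrt_wdeg x' * dotr (f x) (f x').
Proof.
rewrite /dotr !mxE mulr_sumr; apply: eq_bigr => j _.
by rewrite !mxE mulrACA.
Qed.

Hypothesis wdeg_gt0 : forall x, 0 < wdeg w x.

Lemma sqrt_wdeg_neq0 (x : 'I_n) : sqrt_wdeg x != 0.
Proof. by rewrite gt_eqF // sqrtr_gt0. Qed.

Lemma wdegM_sqr (x x' : 'I_n) : wdeg w x * wdeg w x' = (sqrt_wdeg x * sqrt_wdeg x') ^+ 2.
Proof. by rewrite exprMn !sqr_sqrtr // ltW. Qed.

End TemperatureLoss.

Theorem theorem5 (R : rcfType) (n k : nat) (w T : 'M[R]_n)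
  (w_sym : forall x x', w x x' = w x' x)
  (w_ge0 : forall x x', 0 <= w x x')
  (w_sum1 : \sum_(x < n) \sum_(x' < n) w x x' = 1)
  (wdeg_gt0 : forall x, 0 < wdeg w x)
  (T_gt0 : forall x x', 0 < T x x') :
  exists C : R, forall f : 'I_n -> 'rV[R]_k,
    loss_T w T f = wFnorm2 T (hadamard T (Abar w) - Fmat w f *m (Fmat w f)^T) + C.
Proof.
exists (- \sum_(x < n) \sum_(x' < n) w x x' ^+ 2 / (wdeg w x * wdeg w x')) => f.
rewrite loss_TE /wFnorm2 -sumrN -big_split; apply: eq_bigr => x _.
rewrite -sumrN -big_split; apply: eq_bigr => x' _.
have T_neq0 : T x x' != 0 by rewrite gt_eqF.
rewrite 2!mxE AbarE mxE Fmat_mul_trE !wdegM_sqr //.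
by rewrite complete_square_scaled // mulf_neq0 // sqrt_wdeg_neq0.
Qed.
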